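(* Fix constants $\alpha,\beta$. For parameters $r,s$, let $a^{(r,s)}_n$ be the sequence with generating function $$G_{r,s}(x)=\cfrac{1}{1-(\alpha+s)x-\cfrac{\beta x^2}{1-(\alpha+r)x-\cfrac{\beta x^2}{1-(\alpha+r)x}}},$$ and let $b^{(r,s)}_n$ be its revert transform. Then the Hankel transform $\left(\det(b^{(r,s)}_{i+j})_{0\le i,j\le n}\right)_{n\ge0}$ is the same sequence for all values of $r$ and $s$.
   Context: For a power series $g(x)$ with $g(0)\ne0$, its revert transform is the sequence whose generating function is $\frac1x\,\mathrm{Rev}(xg(x))$, where $\mathrm{Rev}(f)$ denotes the compositional inverse of $f$ (the series $u$ with $f(u(x))=x$, $u(0)=0$). The Hankel transform of a sequence $(b_n)$ is the sequence $h_n=\det(b_{i+j})_{0\le i,j\le n}$, $n\ge0$. *)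

From mathcomp Require Import all_boot all_order all_algebra.
Set Implicit Arguments. Unset Strict Implicit. Unset Printing Implicit Defensive.
Import GRing.Theory.
Local Open Scope ring_scope.

Section Series.
Variable K : fieldType.
Notation series := (nat -> K).

Definition sone : series := fun n => (n == 0)%:R.
Definition sX : series := fun n => (n == 1)%:R.

Definition smul (a b : series) : series :=
  fun n => \sum_(i < n.+1) a i * b (n - i)%N.

Fixpoint spow (a : series) (k : nat) : series :=
  if k is k'.+1 then smul a (spow a k') else sone.

Definition sshift (k : nat) (a : series) : series :=
  fun n => if (k <= n)%N then a (n - k)%N else 0.

(* composition f(u(x)), meaningful when u 0 = 0 *)
Definition scomp (f u : series) : series :=
  fun n => \sum_(k < n.+1) f k * spow u k n.

(* multiplicative inverse of a series with a 0 != 0: the coefficients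
   0..n are computed by the usual recursion 
   c_0 = a_0^-1,  c_m = - a_0^-1 * sum_{i=1}^m a_i c_{m-i}. *)
Fixpoint sinv_prefix (a : series) (n : nat) : seq K :=
  if n is m.+1 then
    let p := sinv_prefix a m in
    rcons p (- (a 0%N)^-1 * \sum_(i < m.+1) a i.+1 * nth 0 p (m - i)%N)
  else [:: (a 0%N)^-1].

Definition sinv (a : series) : series := fun n => nth 0 (sinv_prefix a n) n.

Definition is_Rev (f u : series) : Prop := u 0%N = 0 /\ forall n, scomp f u n = sX n.

Definition hankel (b : series) (n : nat) : K :=
  \det (\matrix_(i < n.+1, j < n.+1) b (i + j)%N).

Definition Gcf (alpha beta r s : K) : series :=
  let T1 := sinv (fun n => sone n - (alpha + r) * sX n) in
  let T2 := sinv (fun n => sone n - (alpha + r) * sX n - beta * sshift 2 T1 n) in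
  sinv (fun n => sone n - (alpha + s) * sX n - beta * sshift 2 T2 n).

End Series.

From mathcomp Require Import all_boot all_order all_algebra.
From mathcomp Require Import ring zify.
Set Implicit Arguments. Unset Strict Implicit. Unset Printing Implicit Defensive.
Import GRing.Theory.
Local Open Scope ring_scope.

(* Let u = Rev(x G_{r,s}), b = u / x its revert transform and
   a = 1 / b = G_{r,s}(u) = 1 + a_1 x + x^2 S.  Multiplying the Hankel matrix of b
   by the unitriangular Toeplitz matrix of a shows that the Hankel determinant of b
   of order n + 2 is, up to sign, that of S of order n + 1.  Substituting u into
   the continued fraction and eliminating its levels gives a_1 = alpha + s and
   S (w^2 - beta x^2) = beta w with w = 1 - (r - s) x + x^2 S, an equation with a
   unique power series solution, depending on r - s only.  Replacing r - s by
   r - s + tau turns that solution into its binomial transform with parameter tau,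
   and binomial transforms preserve Hankel determinants.
   Power series identities are proved through truncations, as congruences of
   polynomials modulo X^N for every N. *)

Section HankelDeterminants.
Variable K : fieldType.

Lemma det_unitrig n (A : 'M[K]_n) :
  (forall i j : 'I_n, (i < j)%N -> A i j = 0) -> (forall i, A i i = 1) -> \det A = 1.
Proof.
move=> A_trig A_diag; rewrite det_trig; last exact/is_trig_mxP.
by rewrite big1 // => i _; rewrite A_diag.
Qed.

Lemma eq_hankel (f g : nat -> K) : f =1 g -> hankel f =1 hankel g.
Proof. by move=> fg n; congr (\det _); apply/matrixP => i j; rewrite !mxE fg. Qed.

Lemma sum_ord_prefix (m : nat) (k : 'I_m) (F : nat -> K) :
  \sum_(j < m) (if (j <= k)%N then F j else 0) = \sum_(j < k.+1) F j.
Proof.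
rewrite (big_ord_widen _ F (ltn_ord k)) [RHS]big_mkcond /=.
by apply: eq_bigr => j _; rewrite ltnS.
Qed.

(* Right multiplication by the upper unitriangular Toeplitz matrix [U] of [a]
   clears the first row of the Hankel matrix of [F] except its corner entry 1, and
   the complementary minor becomes [- T *m A2] with [T] lower unitriangular. *)
Lemma hankelS_inv (F a : nat -> K) n : F 0%N = 1 -> smul F a =1 sone K ->
  hankel F n.+1 = (-1) ^+ n.+1 * hankel (fun k => a k.+2) n.
Proof.
move=> F0 Fa.
have a0 : a 0%N = 1 by move: (Fa 0%N); rewrite /smul big_ord1 F0 mul1r.
pose H := \matrix_(i < n.+2, j < n.+2) F (i + j)%N.
pose U := \matrix_(i < n.+2, j < n.+2) (if (i <= j)%N then a (j - i)%N else 0).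
have detU : \det U = 1.
  rewrite -det_tr; apply: det_unitrig => [i j ij|i]; rewrite !mxE.
    by rewrite leqNgt ij.
  by rewrite leqnn subnn a0.
have HU i k : (H *m U) i k = (i + k == 0)%N%:R - \sum_(l < i) F l * a (i + k - l)%N.
  have := Fa (i + k)%N; rewrite /smul /sone => <-.
  rewrite !mxE -addnS big_split_ord /= [X in X - _]addrC addrK.
  transitivity (\sum_(j < n.+2) (if (j <= k)%N then F (i + j)%N * a (k - j)%N else 0)).
    by apply: eq_bigr => j _; rewrite !mxE; case: ifP; rewrite ?mulr0.
  rewrite (sum_ord_prefix k (fun j => F (i + j)%N * a (k - j)%N)).
  by apply: eq_bigr => j _; rewrite /= subnDl.
pose T := \matrix_(i < n.+1, p < n.+1) (if (p <= i)%N then F (i - p)%N else 0).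
pose A2 := \matrix_(i < n.+1, j < n.+1) a (i + j).+2.
have minorHU : row' ord0 (col' ord0 (H *m U)) = - (T *m A2).
  apply/matrixP => i k.
  rewrite [LHS]mxE [LHS]mxE HU [RHS]mxE /= /bump /= !add1n sub0r; congr (- _).
  rewrite [RHS]mxE [RHS](eq_bigr (fun j : 'I_n.+1 =>
      if (j <= i)%N then F (i - j)%N * a (j + k).+2 else 0)); last first.
    by move=> j _; rewrite !mxE; case: ifP; rewrite ?mul0r.
  rewrite (sum_ord_prefix i (fun j => F (i - j)%N * a (j + k).+2)).
  rewrite (reindex_inj (@rev_ord_inj _)) /=; apply: eq_bigr => j _.
  have := ltn_ord j => hj; congr (F _ * a _); lia.
have -> : hankel F n.+1 = \det (H *m U) by rewrite det_mulmx detU mulr1.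
rewrite (expand_det_row _ ord0) big_ord_recl big1 ?addr0; last first.
  by move=> j _; rewrite HU /= big_ord0 subr0 mul0r.
rewrite HU /= big_ord0 subr0 mul1r /cofactor /= expr0 mul1r minorHU.
rewrite -scaleN1r detZ det_mulmx.
have -> : \det T = 1.
  apply: det_unitrig => [i j ij|i]; rewrite !mxE; first by rewrite leqNgt ij.
  by rewrite leqnn subnn F0.
by rewrite mul1r.
Qed.
End HankelDeterminants.

Section BinomialTransform.
Variable K : fieldType.

Definition binomial_transform (t : K) (g : nat -> K) (m : nat) : K :=
  \sum_(k < m.+1) 'C(m, k)%:R * t ^+ (m - k) * g k.

Lemma sum_binomial_hockey i j :
  (\sum_(l < i.+1) 'C(i - l + j, j) = 'C(i + j.+1, j.+1))%N.
Proof.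
elim: i => [|i IH]; first by rewrite big_ord1 /= !binn.
rewrite big_ord_recl /= subn0.
under eq_bigr => l _ do rewrite /bump /= add1n subSS.
by rewrite IH addSnnS [in RHS]addnS binS addSnnS addnC.
Qed.

Definition binomial_mx (t : K) n : 'M[K]_n :=
  \matrix_(i < n, k < n) ('C(i, k)%:R * t ^+ (i - k)).

Lemma coef_XaddC_exp (t : K) i k :
  (('X + t%:P) ^+ i)`_k = 'C(i, k)%:R * t ^+ (i - k).
Proof.
elim: i k => [|i IH] k.
  by rewrite expr0 coefC; case: k => [|k]; rewrite ?bin0 ?expr0 ?mulr1 ?bin0n ?mul0r.
rewrite exprSr mulrDr coefD coefMX coefMC !IH.
case: k => [|k] /=; first by rewrite !bin0 !subn0 !mul1r add0r exprSr.
rewrite binS natrD mulrDl addrC.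
congr (_ + _); case: (ltnP k i) => ki.
  by rewrite -mulrA -exprSr subnSK.
by rewrite bin_small ?ltnS // !mul0r.
Qed.

Lemma sum_coefXn (B k : nat) (g : nat -> K) :
  (k < B)%N -> \sum_(m < B) ('X^k)`_m * g m = g k.
Proof.
move=> kB; under eq_bigr => m _ do rewrite coefXn mulr_natl mulrb.
by rewrite -big_mkcond (big_ord1_eq _ g) kB.
Qed.

Lemma binomial_transformE (t : K) g B m : (m < B)%N ->
  binomial_transform t g m = \sum_(k < B) (('X + t%:P) ^+ m)`_k * g k.
Proof.
move=> mB; rewrite /binomial_transform.
rewrite (big_ord_widen _ (fun k => 'C(m, k)%:R * t ^+ (m - k) * g k) mB) big_mkcond.
apply: eq_bigr => k _; rewrite coef_XaddC_exp ltnS.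
by case: leqP => // mk; rewrite bin_small // !mul0r.
Qed.

Lemma XaddC_exp_binomial_mx (t : K) n (i : 'I_n) :
  ('X + t%:P) ^+ i = \sum_(k < n) binomial_mx t n i k *: 'X^k.
Proof.
apply/polyP => m; rewrite coef_XaddC_exp coef_sum.
under eq_bigr => k _ do rewrite coefZ coefXn eq_sym mulr_natr mulrb mxE.
rewrite -big_mkcond (big_ord1_eq _ (fun k => 'C(i, k)%:R * t ^+ (i - k))).
by case: ltnP => // nm; rewrite bin_small ?mul0r // (leq_trans (ltn_ord i) nm).
Qed.

Lemma det_binomial_mx (t : K) n : \det (binomial_mx t n) = 1.
Proof.
apply: det_unitrig => [i j ij|i]; rewrite !mxE; first by rewrite bin_small // mul0r.
by rewrite binn subnn expr0 mulr1.
Qed.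

(* Read [(X + t)^i (X + t)^j = (X + t)^(i + j)] through the moment functional
   [L : p |-> \sum_m p_m g_m]. *)
Lemma hankel_mx_binomial_transform (t : K) g n :
  \matrix_(i < n, j < n) binomial_transform t g (i + j)%N =
  binomial_mx t n *m \matrix_(i < n, j < n) g (i + j)%N *m (binomial_mx t n)^T.
Proof.
pose B := (n + n)%N; pose L (p : {poly K}) := \sum_(m < B) p`_m * g m.
have L_sum (c : 'I_n -> 'I_n -> K) :
    L (\sum_(k < n) \sum_(l < n) c k l *: 'X^(k + l)) =
    \sum_(k < n) \sum_(l < n) c k l * g (k + l)%N.
  rewrite /L; under eq_bigr => m _ do rewrite coef_sum big_distrl /=.
  rewrite exchange_big /=; apply: eq_bigr => k _.
  under eq_bigr => m _ do rewrite coef_sum big_distrl /=.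
  rewrite exchange_big /=; apply: eq_bigr => l _.
  under eq_bigr => m _ do rewrite coefZ -mulrA.
  rewrite -mulr_sumr sum_coefXn // /B.
  by have := ltn_ord k; have := ltn_ord l; lia.
apply/matrixP => i j; rewrite !mxE.
have ijB : (i + j < B)%N by have := ltn_ord i; have := ltn_ord j; rewrite /B; lia.
rewrite (binomial_transformE _ _ ijB) -/(L _) exprD !XaddC_exp_binomial_mx mulr_suml.
under eq_bigr => k _ do rewrite mulr_sumr.
under eq_bigr => k _ do under eq_bigr => l _ do
  rewrite -scalerAl -scalerAr scalerA -exprD.
rewrite L_sum exchange_big /=; apply: eq_bigr => l _; rewrite !mxE big_distrl /=.
by apply: eq_bigr => k _; rewrite !mxE mulrAC mulrA.
Qed.

Lemma hankel_binomial_transform (t : K) g : hankel (binomial_transform t g) =1 hankel g.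
Proof.
move=> n; rewrite /hankel hankel_mx_binomial_transform !det_mulmx det_tr.
by rewrite det_binomial_mx mul1r mulr1.
Qed.

End BinomialTransform.

Section PolynomialTruncation.
Variable K : fieldType.
Implicit Types (f g : nat -> K) (p q : {poly K}).

Definition ptrunc N f : {poly K} := \poly_(i < N) f i.

Definition eqmodXn N p q := 'X^N %| p - q.

Lemma dvdXnP N p : reflect (forall i, (i < N)%N -> p`_i = 0) ('X^N %| p).
Proof.
apply: (iffP idP) => [/dvdpP [q ->] i iN | p_low]; first by rewrite coefMXn iN.
rewrite -(poly_take_drop N p) dvdp_add ?dvdp_mull //.
suff -> : take_poly N p = 0 by rewrite dvdp0.
by apply/polyP => i; rewrite coef_take_poly coef0; case: ifP => // /p_low.
Qed.

Lemma dvdXn_le M N p : (M <= N)%N -> 'X^N %| p -> 'X^M %| p.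
Proof. by move=> MN; apply: dvdp_trans; apply: dvdp_exp2l. Qed.

Lemma dvdXnS N p : ('X^(N.+1) %| 'X * p) = ('X^N %| p).
Proof. by rewrite exprS dvdp_mul2l // polyX_eq0. Qed.

Lemma dvdXn_comp N p U : 'X %| U -> 'X^N %| p -> 'X^N %| p \Po U.
Proof.
move=> XU pN; apply: (@dvdp_trans _ (U ^+ N)); first exact: dvdp_exp2r.
have <- : 'X^N \Po U = U ^+ N by rewrite rmorphXn /= comp_polyX.
by apply: dvdp_comp_poly.
Qed.

Lemma eqmodXn_refl N p : eqmodXn N p p.
Proof. by rewrite /eqmodXn subrr dvdp0. Qed.

Lemma eqmodXn_sym N p q : eqmodXn N p q -> eqmodXn N q p.
Proof. by rewrite /eqmodXn -opprB dvdpNr. Qed.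

Lemma eqmodXn_trans N p q r : eqmodXn N p q -> eqmodXn N q r -> eqmodXn N p r.
Proof. by move=> pq qr; rewrite /eqmodXn -(subrKA q) dvdp_add. Qed.

Lemma eqmodXnB N p q p' q' :
  eqmodXn N p q -> eqmodXn N p' q' -> eqmodXn N (p - p') (q - q').
Proof.
move=> pq pq'; rewrite /eqmodXn.
have -> : p - p' - (q - q') = (p - q) - (p' - q') by ring.
exact: dvdp_sub.
Qed.

Lemma eqmodXnM N p q p' q' :
  eqmodXn N p q -> eqmodXn N p' q' -> eqmodXn N (p * p') (q * q').
Proof.
move=> pq pq'; rewrite /eqmodXn.
have -> : p * p' - q * q' = p' * (p - q) + q * (p' - q') by ring.
by rewrite dvdp_add ?dvdp_mull.
Qed.

Lemma eqmodXn_comp N p q U : 'X %| U -> eqmodXn N p q -> eqmodXn N (p \Po U) (q \Po U).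
Proof. by move=> XU pq; rewrite /eqmodXn -comp_polyB dvdXn_comp. Qed.

Lemma eqmodXn_coef N p q i : eqmodXn N p q -> (i < N)%N -> p`_i = q`_i.
Proof. by move=> /dvdXnP pq iN; apply/eqP; rewrite -subr_eq0 -coefB pq. Qed.

Lemma coef_ptrunc N f i : (ptrunc N f)`_i = if (i < N)%N then f i else 0.
Proof. exact: coef_poly. Qed.

Lemma eq_ptrunc N f g : f =1 g -> ptrunc N f = ptrunc N g.
Proof. by move=> fg; apply/polyP => i; rewrite !coef_ptrunc fg. Qed.

Lemma ptruncB N f g : ptrunc N (fun n => f n - g n) = ptrunc N f - ptrunc N g.
Proof. by apply/polyP => i; rewrite coefB !coef_ptrunc; case: ifP; rewrite ?subr0. Qed.

Lemma ptruncZ N c f : ptrunc N (fun n => c * f n) = c%:P * ptrunc N f.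
Proof. by apply/polyP => i; rewrite coefCM !coef_ptrunc; case: ifP; rewrite ?mulr0. Qed.

Lemma ptrunc_le M N f : (N <= M)%N -> eqmodXn N (ptrunc M f) (ptrunc N f).
Proof.
move=> NM; apply/dvdXnP => i iN.
by rewrite coefB !coef_ptrunc iN (leq_trans iN NM) subrr.
Qed.

Lemma dvdX_ptrunc N f : f 0%N = 0 -> 'X %| ptrunc N f.
Proof.
move=> f0; rewrite -[X in X %| _]expr1; apply/dvdXnP => i.
by rewrite ltnS leqn0 => /eqP ->; rewrite coef_ptrunc f0; case: ifP.
Qed.

Lemma ptrunc_sone N : eqmodXn N (ptrunc N (sone K)) 1.
Proof. by apply/dvdXnP => i iN; rewrite coefB coef_ptrunc iN coef1 subrr. Qed.

Lemma ptrunc_sX N : eqmodXn N (ptrunc N (sX K)) 'X.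
Proof. by apply/dvdXnP => i iN; rewrite coefB coef_ptrunc iN coefX subrr. Qed.

Lemma ptrunc_sshift N k f : eqmodXn N (ptrunc N (sshift k f)) ('X^k * ptrunc N f).
Proof.
apply/dvdXnP => i iN; rewrite coefB coefXnM !coef_ptrunc iN /sshift.
by case: ltnP => ki; rewrite ?(leq_ltn_trans (leq_subr _ _) iN) subrr.
Qed.

Lemma ptrunc_smul N f g : eqmodXn N (ptrunc N (smul f g)) (ptrunc N f * ptrunc N g).
Proof.
apply/dvdXnP => i iN; rewrite coefB coefM coef_ptrunc iN /smul.
apply/eqP; rewrite subr_eq0; apply/eqP; apply: eq_bigr => j _.
by rewrite !coef_ptrunc (leq_ltn_trans (leq_ord j) iN) (leq_ltn_trans (leq_subr _ _) iN).
Qed.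

Lemma ptrunc_spow N f k : eqmodXn N (ptrunc N (spow f k)) (ptrunc N f ^+ k).
Proof.
elim: k => [|k IH] /=; first exact: ptrunc_sone.
rewrite exprS; apply: eqmodXn_trans (ptrunc_smul _ _ _) _.
exact: eqmodXnM (eqmodXn_refl _ _) IH.
Qed.

Lemma ptrunc_scomp N f u : u 0%N = 0 ->
  eqmodXn N (ptrunc N (scomp f u)) (ptrunc N f \Po ptrunc N u).
Proof.
move=> u0; have XU := dvdX_ptrunc N u0.
apply/dvdXnP => i iN; rewrite coefB coef_ptrunc iN /scomp.
rewrite {2}/ptrunc poly_def rmorph_sum /= coef_sum; apply/eqP; rewrite subr_eq0; apply/eqP.
rewrite (big_ord_widen _ (fun k => f k * spow u k i) iN) big_mkcond /=.
apply: eq_bigr => k _; rewrite comp_polyZ rmorphXn /= comp_polyX coefZ ltnS.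
case: leqP => ik; last by have /dvdXnP -> := dvdp_exp2r k XU; rewrite ?mulr0.
by rewrite -(eqmodXn_coef (ptrunc_spow N u k) iN) coef_ptrunc iN.
Qed.

Lemma ptrunc_split2 M (f : nat -> K) :
  eqmodXn M (ptrunc M f)
    ((f 0%N)%:P + (f 1%N)%:P * 'X + 'X^2 * ptrunc M (fun k => f k.+2)).
Proof.
apply/dvdXnP => -[|[|i]] iM.
all: rewrite coefB !coefD coefC coefCM coefX coefXnM !coef_ptrunc iM /=.
- by rewrite mulr0 !addr0 subrr.
- by rewrite mulr1 add0r addr0 subrr.
by rewrite mulr0 !add0r subn2 (ltn_trans _ (ltnW iM)) ?subrr.
Qed.

Lemma size_sinv_prefix f n : size (sinv_prefix f n) = n.+1.
Proof. by elim: n => [|n IH] //=; rewrite size_rcons IH. Qed.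

Lemma nth_sinv_prefix f n m : (m <= n)%N -> nth 0 (sinv_prefix f n) m = sinv f m.
Proof.
elim: n => [|n IH]; first by rewrite leqn0 => /eqP ->.
rewrite leq_eqVlt => /orP [/eqP -> //|]; rewrite ltnS => mn.
by rewrite /= nth_rcons size_sinv_prefix ltnS mn IH.
Qed.

Lemma sinvS f m : sinv f m.+1 = - (f 0%N)^-1 * \sum_(i < m.+1) f i.+1 * sinv f (m - i)%N.
Proof.
rewrite {1}/sinv /= nth_rcons size_sinv_prefix ltnn eqxx; congr (_ * _).
by apply: eq_bigr => i _; rewrite nth_sinv_prefix // leq_subr.
Qed.

Lemma smul_sinv f : f 0%N != 0 -> smul f (sinv f) =1 sone K.
Proof.
move=> f0 [|m]; rewrite /smul; first by rewrite big_ord1 /sinv /= mulfV.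
rewrite big_ord_recl /= subn0 sinvS mulrA mulrN mulfV // mulN1r.
by rewrite /sone /=; apply/eqP; rewrite addrC subr_eq0.
Qed.

Lemma ptrunc_sinv N f : f 0%N != 0 -> eqmodXn N (ptrunc N f * ptrunc N (sinv f)) 1.
Proof.
move=> f0; apply: eqmodXn_trans (eqmodXn_sym (ptrunc_smul _ _ _)) _.
by rewrite (eq_ptrunc _ (smul_sinv f0)); apply: ptrunc_sone.
Qed.

End PolynomialTruncation.

Section GeometricSeries.
Variables (K : fieldType) (N : nat) (tau : K).
Let P := ptrunc N (fun j => tau ^+ j).

Lemma ptrunc_geometric : eqmodXn N (P * (1 - tau%:P * 'X)) 1.
Proof.
apply/dvdXnP => -[|i] iN; rewrite mulrBr mulr1 mulrCA !coefB coefCM coefMX coef1 /=.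
  by rewrite coef_ptrunc iN expr0 mulr0 !subr0 subrr.
by rewrite !coef_ptrunc iN (ltn_trans (ltnSn i) iN) exprS !subr0 subrr.
Qed.

Lemma coef_ptrunc_geometric_exp j i :
  (i < N)%N -> (P ^+ j.+1)`_i = 'C(i + j, j)%:R * tau ^+ i.
Proof.
elim: j i => [|j IH] i iN; first by rewrite expr1 coef_ptrunc iN bin0 mul1r.
rewrite exprS coefM -sum_binomial_hockey natr_sum mulr_suml.
apply: eq_bigr => l _; have lN : (l < N)%N by apply: leq_ltn_trans iN; rewrite -ltnS.
rewrite IH ?(leq_ltn_trans (leq_subr _ _) iN) // coef_ptrunc lN.
by rewrite mulrCA -exprD subnKC // -ltnS.
Qed.

(* The binomial transform with parameter [tau] has generating function
   [1 / (1 - tau x) * S (x / (1 - tau x))]. *)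
Lemma ptrunc_binomial_transform S :
  eqmodXn N (ptrunc N (binomial_transform tau S)) (P * (ptrunc N S \Po ('X * P))).
Proof.
apply/dvdXnP => n nN; rewrite coefB coef_ptrunc nN {1}/ptrunc poly_def rmorph_sum /=.
rewrite mulr_sumr coef_sum /binomial_transform.
rewrite (big_ord_widen _ (fun k => 'C(n, k)%:R * tau ^+ (n - k) * S k) nN) big_mkcond /=.
rewrite -sumrB big1 // => k _.
rewrite comp_polyZ rmorphXn /= comp_polyX -scalerAr coefZ exprMn mulrCA -exprS.
rewrite coefXnM ltnS.
case: leqP => kn; last by rewrite mulr0 subrr.
rewrite coef_ptrunc_geometric_exp ?subnK ?(leq_ltn_trans (leq_subr _ _) nN) //.
by rewrite mulrC subrr.
Qed.

End GeometricSeries.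

Section ContinuedFractionResidual.
Variable R : comPzRingType.
Implicit Types t tau beta x P S : R.

Definition cf_residual t beta x S : R :=
  let w := 1 - t * x + x ^+ 2 * S in S * (w ^+ 2 - beta * x ^+ 2) - beta * w.

Lemma cf_residualB t beta x S (S' : R) :
  cf_residual t beta x S - cf_residual t beta x S' =
  (S - S') * ((1 - t * x + x ^+ 2 * S) ^+ 2 - (beta + beta) * x ^+ 2
              + S' * x ^+ 2 * ((1 - t * x + x ^+ 2 * S) + (1 - t * x + x ^+ 2 * S'))).
Proof. by rewrite /cf_residual; ring. Qed.

(* For [P = 1 / (1 - tau x)] the correction term vanishes: the substitution
   [x -> x / (1 - tau x)], [S -> S / (1 - tau x)] maps a root for [t] to a root for
   [t + tau]. *)
Lemma cf_residual_shift t tau beta x P S :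
  P * cf_residual (t + tau) beta x (P * S) =
  cf_residual t beta (x * P) S + (P * (1 - tau * x) - 1) *
    (S * (P * (1 - (t + tau) * x + x ^+ 2 * (P * S)) + (1 - t * (x * P) + (x * P) ^+ 2 * S))
     - beta).
Proof. by rewrite /cf_residual; ring. Qed.

End ContinuedFractionResidual.

Section ContinuedFractionRoots.
Variable K : fieldType.
Implicit Types (t tau beta : K) (S : nat -> K) (p m : {poly K}).

Definition cf_root t beta S :=
  forall N, 'X^N %| cf_residual t%:P beta%:P 'X (ptrunc N S).

Lemma cf_residual_comp t beta p m :
  cf_residual t%:P beta%:P 'X p \Po m = cf_residual t%:P beta%:P m (p \Po m).
Proof.
rewrite /cf_residual !(rmorphB, rmorphD, rmorphM, rmorphXn, rmorph1) /=.
by rewrite !comp_polyC comp_polyX.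
Qed.

Lemma eqmodXn_cf_residual N (t beta x p q : {poly K}) :
  eqmodXn N p q -> eqmodXn N (cf_residual t beta x p) (cf_residual t beta x q).
Proof. by rewrite /eqmodXn cf_residualB; apply: dvdp_mulr. Qed.

Lemma coprimep_Xn N p : p.[0] != 0 -> coprimep ('X^N) p.
Proof.
move=> p0; apply: coprimep_expl.
by rewrite coprimep_sym -['X]subr0 -polyC0 coprimep_XsubC.
Qed.

Lemma cf_root_uniq t beta S S' : cf_root t beta S -> cf_root t beta S' -> S =1 S'.
Proof.
move=> rS rS' n; have := dvdp_sub (rS n.+1) (rS' n.+1).
rewrite cf_residualB Gauss_dvdpl; last first.
  apply: coprimep_Xn; rewrite !hornerE /= expr0n /=.
  by rewrite !(mulr0, mul0r, subr0, addr0) expr1n oner_neq0.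
move=> /dvdXnP /(_ n (ltnSn n)) /eqP.
by rewrite coefB !coef_ptrunc ltnSn subr_eq0 => /eqP.
Qed.

Lemma cf_root_binomial_transform t tau beta S :
  cf_root t beta S -> cf_root (t + tau) beta (binomial_transform tau S).
Proof.
move=> rS N; set P := ptrunc N (fun j => tau ^+ j); set Sm := ptrunc N S \Po ('X * P).
pose E := cf_residual (t + tau)%:P beta%:P 'X (P * Sm).
have Pq : 'X^N %| P * (1 - tau%:P * 'X) - 1 := ptrunc_geometric N tau.
have rSm : 'X^N %| cf_residual t%:P beta%:P ('X * P) Sm.
  by rewrite -cf_residual_comp dvdXn_comp ?dvdp_mulIl.
have PE : 'X^N %| P * E by rewrite /E polyCD cf_residual_shift dvdp_add ?dvdp_mulr.
have rPSm : 'X^N %| E.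
  have -> : E = (1 - tau%:P * 'X) * (P * E) - (P * (1 - tau%:P * 'X) - 1) * E by ring.
  by rewrite dvdp_sub ?(dvdp_mull _ PE) ?(dvdp_mulr _ Pq).
have := eqmodXn_cf_residual (t + tau)%:P beta%:P 'X (ptrunc_binomial_transform N tau S).
by rewrite /eqmodXn -/P -/Sm -/E => /dvdp_add /(_ rPSm); rewrite subrK.
Qed.

End ContinuedFractionRoots.

Section Elimination.
Variable K : fieldType.

(* Read [U] as the revert series u, [B] as u / x, [A] as x / u = G(u), and [g],
   [t2], [t1] as the levels G, T2, T1 of the continued fraction composed with u;
   eliminating them leaves the algebraic equation satisfied by [A]. *)
Lemma cf_elimination L (c d beta : K) (U B A g t1 t2 : {poly K}) :
  eqmodXn L.+1 (U * g) 'X -> eqmodXn L.+1 U ('X * B) -> eqmodXn L (B * A) 1 ->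
  eqmodXn L (g * (1 - d%:P * U - beta%:P * (U ^+ 2 * t2))) 1 ->
  eqmodXn L (t2 * (1 - c%:P * U - beta%:P * (U ^+ 2 * t1))) 1 ->
  eqmodXn L (t1 * (1 - c%:P * U)) 1 ->
  'X^L %| (A - d%:P * 'X - 1) * ((A - c%:P * 'X) ^+ 2 - beta%:P * 'X ^+ 2)
          - beta%:P * 'X ^+ 2 * (A - c%:P * 'X).
Proof.
rewrite /eqmodXn => Ug UB BA gq t2q t1q.
have Bg : 'X^L %| B * g - 1.
  rewrite -dvdXnS; have -> : 'X * (B * g - 1) = g * ('X * B - U) + (U * g - 'X) by ring.
  by rewrite dvdp_add ?dvdp_mull // -opprB dvdpNr.
have {}UB : 'X^L %| U - 'X * B := dvdXn_le (leqnSn L) UB.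
have gA : 'X^L %| A - g.
  have -> : A - g = - A * (B * g - 1) + g * (B * A - 1) by ring.
  by rewrite dvdp_add ?dvdp_mull.
have AU : 'X^L %| A * U - 'X.
  have -> : A * U - 'X = A * (U - 'X * B) + 'X * (B * A - 1) by ring.
  by rewrite dvdp_add ?dvdp_mull.
set w1 := 1 - c%:P * U; set w2 := w1 - beta%:P * (U ^+ 2 * t1).
have Aq : 'X^L %| A * (1 - d%:P * U - beta%:P * (U ^+ 2 * t2)) - 1.
  set q := 1 - _ - _.
  have -> : A * q - 1 = q * (A - g) + (g * q - 1) by ring.
  by rewrite dvdp_add ?dvdp_mull.
have G_eq : 'X^L %| A - d%:P * 'X - beta%:P * 'X * U * t2 - 1.
  have -> : A - d%:P * 'X - beta%:P * 'X * U * t2 - 1 =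
    (A * (1 - d%:P * U - beta%:P * (U ^+ 2 * t2)) - 1) +
    (d%:P + beta%:P * U * t2) * (A * U - 'X) by ring.
  by rewrite dvdp_add ?dvdp_mull.
have T2_eq : 'X^L %| t2 * ((A - c%:P * 'X) ^+ 2 - beta%:P * 'X ^+ 2) - A * (A - c%:P * 'X).
  have -> : t2 * ((A - c%:P * 'X) ^+ 2 - beta%:P * 'X ^+ 2) - A * (A - c%:P * 'X) =
    (t2 * (c%:P * (A - c%:P * 'X + A * w1) + beta%:P * (A * U + 'X))) * (A * U - 'X)
    + (t2 * beta%:P * A ^+ 2 * U ^+ 2) * (t1 * w1 - 1)
    + (A ^+ 2 * w1) * (t2 * w2 - 1)
    + (- c%:P * A) * (A * U - 'X) by rewrite /w2 /w1; ring.
  by rewrite !dvdp_add ?dvdp_mull.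
have -> : (A - d%:P * 'X - 1) * ((A - c%:P * 'X) ^+ 2 - beta%:P * 'X ^+ 2)
            - beta%:P * 'X ^+ 2 * (A - c%:P * 'X) =
  ((A - c%:P * 'X) ^+ 2 - beta%:P * 'X ^+ 2) * (A - d%:P * 'X - beta%:P * 'X * U * t2 - 1)
  + (beta%:P * 'X * U) * (t2 * ((A - c%:P * 'X) ^+ 2 - beta%:P * 'X ^+ 2) - A * (A - c%:P * 'X))
  + (beta%:P * 'X * (A - c%:P * 'X)) * (A * U - 'X) by ring.
by rewrite !dvdp_add ?dvdp_mull.
Qed.

End Elimination.

Section Reversion.
Variable K : fieldType.
Implicit Types (g u D : nat -> K) (Q U : {poly K}).

Lemma is_Rev_shift_coef1 g u : is_Rev (sshift 1 g) u -> g 0%N * u 1%N = 1.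
Proof.
case=> u0 /(_ 1%N); rewrite /scomp !big_ord_recl big_ord0 /sshift /= /smul.
by rewrite !big_ord_recl big_ord0 /sone /sX /= u0 mul0r mulr1 !add0r !addr0.
Qed.

Lemma ptrunc_Rev_shift M g u : is_Rev (sshift 1 g) u ->
  eqmodXn M (ptrunc M u * (ptrunc M g \Po ptrunc M u)) 'X.
Proof.
case=> u0 Rev_u; have XU := dvdX_ptrunc M u0.
have := eqmodXn_comp XU (ptrunc_sshift M 1 g).
rewrite comp_polyM comp_polyX => /eqmodXn_sym /eqmodXn_trans; apply.
apply: eqmodXn_trans (eqmodXn_sym (ptrunc_scomp _ _ u0)) _.
by rewrite (eq_ptrunc _ Rev_u); apply: ptrunc_sX.
Qed.

Lemma eqmodXn_comp_sinv M D Q U : D 0%N != 0 -> 'X %| U ->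
  eqmodXn M (ptrunc M D) Q -> eqmodXn M ((ptrunc M (sinv D) \Po U) * (Q \Po U)) 1.
Proof.
move=> D0 XU DQ; have := eqmodXn_comp XU (ptrunc_sinv M D0).
rewrite comp_polyM rmorph1 mulrC; apply: eqmodXn_trans.
by apply: eqmodXnM (eqmodXn_refl _ _) (eqmodXn_comp XU (eqmodXn_sym DQ)).
Qed.

Lemma ptrunc_linear_denom M (c : K) :
  eqmodXn M (ptrunc M (fun n => sone K n - c * sX K n)) (1 - c%:P * 'X).
Proof.
rewrite ptruncB ptruncZ.
exact: eqmodXnB (ptrunc_sone _ _) (eqmodXnM (eqmodXn_refl _ _) (ptrunc_sX _ _)).
Qed.

Lemma ptrunc_cf_denom M (c e : K) T :
  eqmodXn M (ptrunc M (fun n => sone K n - c * sX K n - e * sshift 2 T n))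
            (1 - c%:P * 'X - e%:P * ('X^2 * ptrunc M T)).
Proof.
rewrite ptruncB ptruncZ.
exact: eqmodXnB (ptrunc_linear_denom _ _) (eqmodXnM (eqmodXn_refl _ _) (ptrunc_sshift _ _ _)).
Qed.

Lemma comp_cf_denom (c' e : K) p U :
  (1 - c'%:P * 'X - e%:P * ('X^2 * p)) \Po U = 1 - c'%:P * U - e%:P * (U ^+ 2 * (p \Po U)).
Proof. by rewrite !(rmorphB, rmorphM, rmorph1, rmorphXn) /= !comp_polyC comp_polyX. Qed.

End Reversion.

Section RevertOfGcf.
Variables (K : fieldType) (alpha beta r s : K) (u : nat -> K).
Hypothesis Rev_u : is_Rev (sshift 1 (Gcf alpha beta r s)) u.

Let c := alpha + r.
Let d := alpha + s.
Let T1 := sinv (fun n => sone K n - c * sX K n).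
Let T2 := sinv (fun n => sone K n - c * sX K n - beta * sshift 2 T1 n).
Let G := sinv (fun n => sone K n - d * sX K n - beta * sshift 2 T2 n).
Let b := fun j => u j.+1.
Let a := sinv b.

Lemma revert_Gcf_coef1 : u 1%N = 1.
Proof.
have := is_Rev_shift_coef1 Rev_u; rewrite /Gcf /sinv /= /sone /sX /sshift /=.
by rewrite !mulr0 !subr0 invr1 mul1r.
Qed.

Lemma Gcf_comp_congr M : let U := ptrunc M u in
  [/\ eqmodXn M (U * (ptrunc M G \Po U)) 'X,
      eqmodXn M ((ptrunc M G \Po U) *
                   (1 - d%:P * U - beta%:P * (U ^+ 2 * (ptrunc M T2 \Po U)))) 1,
      eqmodXn M ((ptrunc M T2 \Po U) *
                   (1 - c%:P * U - beta%:P * (U ^+ 2 * (ptrunc M T1 \Po U)))) 1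
    & eqmodXn M ((ptrunc M T1 \Po U) * (1 - c%:P * U)) 1].
Proof.
move=> U; have XU : 'X %| U by apply: dvdX_ptrunc; case: Rev_u.
have denom0 (c' e : K) T : (fun n => sone K n - c' * sX K n - e * sshift 2 T n) 0%N != 0.
  by rewrite /sone /sX /sshift /= !mulr0 !subr0 oner_neq0.
split; first exact: ptrunc_Rev_shift.
- by rewrite -comp_cf_denom; apply: eqmodXn_comp_sinv (ptrunc_cf_denom _ _ _ _).
- by rewrite -comp_cf_denom; apply: eqmodXn_comp_sinv (ptrunc_cf_denom _ _ _ _).
have := eqmodXn_comp_sinv (_ : (fun n => sone K n - c * sX K n) 0%N != 0) XU
  (ptrunc_linear_denom M c).
rewrite rmorphB rmorph1 rmorphM /= comp_polyC comp_polyX; apply.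
by rewrite /sone /sX /= mulr0 subr0 oner_neq0.
Qed.

Lemma cf_root_recip_revert : cf_root (r - s) beta (fun k => a k.+2).
Proof.
move=> N; pose M := N.+3; have [Ug gq t2q t1q] := Gcf_comp_congr M.
set U := ptrunc M u in Ug gq t2q t1q.
pose S := ptrunc M (fun k => a k.+2); pose A := 1 + (a 1%N)%:P * 'X + 'X^2 * S.
have u1 := revert_Gcf_coef1.
have UB : eqmodXn M U ('X * ptrunc M b).
  apply/dvdXnP => -[|i] iM; rewrite coefB coefXM !coef_ptrunc iM /=.
    by case: Rev_u => -> _; rewrite subrr.
  by rewrite (ltn_trans (ltnSn i) iM) subrr.
have BA : eqmodXn M (ptrunc M b * A) 1.
  apply: eqmodXn_trans (ptrunc_sinv M (_ : b 0%N != 0)); last by rewrite /b u1 oner_neq0.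
  apply: eqmodXnM (eqmodXn_refl _ _) (eqmodXn_sym _).
  have a0 : a 0%N = 1 by rewrite /a /sinv /= /b u1 invr1.
  by have := ptrunc_split2 M a; rewrite a0 polyC1.
have LM : (N.+2 <= M)%N by [].
have := cf_elimination Ug UB (dvdXn_le LM BA) (dvdXn_le LM gq)
  (dvdXn_le LM t2q) (dvdXn_le LM t1q).
set E := _ - _ * 'X ^+ 2 * _ => XE.
have a1 : a 1%N = d.
  move: XE; have -> : E = 'X * (((a 1%N - d)%:P + 'X * S) *
      ((A - c%:P * 'X) ^+ 2 - beta%:P * 'X ^+ 2) - beta%:P * 'X * (A - c%:P * 'X)).
    by rewrite /E /A polyCB; ring.
  rewrite dvdXnS => /dvdXnP /(_ 0%N isT) /eqP.
  rewrite -horner_coef0 !hornerE /= expr0n /= !(mulr0, mul0r, addr0, subr0) expr1n mulr1.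
  by rewrite subr_eq0 => /eqP.
move: XE; have -> : E = 'X * ('X * cf_residual (r - s)%:P beta%:P 'X S).
  have cd : (r - s)%:P = c%:P - d%:P by rewrite -polyCB /c /d; congr _%:P; ring.
  by rewrite /E /A a1 cd /cf_residual; ring.
rewrite !dvdXnS => rS.
have NM : (N <= M)%N by rewrite /M; lia.
have := eqmodXn_cf_residual (r - s)%:P beta%:P 'X (ptrunc_le (fun k => a k.+2) NM).
by rewrite /eqmodXn => /(dvdp_sub rS); rewrite opprB subrKC.
Qed.

End RevertOfGcf.

Unset Implicit Arguments.
Set Strict Implicit.

Theorem mainTheorem4 (K : fieldType) (alpha beta r s r' s' : K) (u u' : nat -> K) :
  is_Rev (sshift 1 (Gcf alpha beta r s)) u ->
  is_Rev (sshift 1 (Gcf alpha beta r' s')) u' ->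
  forall n : nat, hankel (fun k => u k.+1) n = hankel (fun k => u' k.+1) n.
Proof.
move=> Rev_u Rev_u' n.
have b0 := revert_Gcf_coef1 Rev_u; have b0' := revert_Gcf_coef1 Rev_u'.
case: n => [|n]; first by rewrite /hankel !det_mx11 !mxE /= b0 b0'.
have inv_b : smul (fun k => u k.+1) (sinv (fun k => u k.+1)) =1 sone K.
  by apply: smul_sinv; rewrite b0 oner_neq0.
have inv_b' : smul (fun k => u' k.+1) (sinv (fun k => u' k.+1)) =1 sone K.
  by apply: smul_sinv; rewrite b0' oner_neq0.
rewrite (hankelS_inv _ b0 inv_b) (hankelS_inv _ b0' inv_b'); congr (_ * _).
have := cf_root_binomial_transform ((r' - s') - (r - s)) (cf_root_recip_revert Rev_u).
rewrite addrC subrK => /(cf_root_uniq (cf_root_recip_revert Rev_u')) tail_u'.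
by rewrite (eq_hankel tail_u') hankel_binomial_transform.
Qed.
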